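(* Let $\mathcal G=(\mathcal V,\mathcal E,w)$ be a finite simple graph with positive edge weights and arboricity at most $\alpha\ge1$, and let $w(\mathcal G)=\sum_{e\in\mathcal E}w(e)$. Let $\delta\in(0,1)$. There is a constant $c=c(\alpha)$ such that the following holds when $s\ge c\log(1/\delta)$. Each node $x$ with at least one incident edge performs $s$ independent trials, in each drawing one incident edge $(x,z)$ with probability $w(x,z)/w(x)$, where $w(x)=\sum_{(x,y)\in\mathcal E}w(x,y)$, and then selects the drawn edge of maximum weight over its $s$ trials (all nodes act independently). Then with probability at least $1-\delta$, $\sum_{x} w(e_x)\ge w(\mathcal G)/(16\alpha)$, where $e_x$ is the edge selected by $x$ (the sum over nodes that have incident edges).
   Context: The arboricity of a graph is the minimum number of forests into which its edge set can be partitioned. *)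

From mathcomp Require Import all_boot.
From Stdlib Require Import Reals.

Set Implicit Arguments.
Unset Strict Implicit.
Unset Printing Implicit Defensive.

Definition acyclic (T : finType) (r : rel T) : Prop :=
  forall c : seq T, uniq c -> (2 < size c)%N -> ~~ cycle r c.

Definition arboricity_le (T : finType) (e : rel T) (a : nat) : Prop :=
  exists col : T -> T -> 'I_a,
    (forall x y, e x y -> col x y = col y x) /\
    (forall i : 'I_a, acyclic [rel x y | e x y && (col x y == i)]).

Definition wdeg (T : finType) (e : rel T) (w : T -> T -> R) (x : T) : R :=
  \big[Rplus/0%R]_(y | e x y) w x y.

(* w(G) = sum over (unordered) edges of their weight *)
Definition wgraph (T : finType) (e : rel T) (w : T -> T -> R) : R :=
  (/ 2 * \big[Rplus/0%R]_(x : T) wdeg e w x)%R.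

Definition has_edge (T : finType) (e : rel T) (x : T) : bool :=
  [exists y, e x y].

(* Isolated nodes perform no sampling; formally they draw
   themselves with probability 1 (irrelevant: they do not enter the sum). *)
Definition pdraw (T : finType) (e : rel T) (w : T -> T -> R) (x z : T) : R :=
  if e x z then (w x z / wdeg e w x)%R
  else if has_edge e x then 0%R
  else if z == x then 1%R else 0%R.

(* Outcome of the experiment: om x j = the vertex z drawn by x in trial j. *)
Definition outcome (T : finType) (s : nat) := {ffun T -> {ffun 'I_s -> T}}.

Definition outcome_prob (T : finType) (e : rel T) (w : T -> T -> R) (s : nat)
    (om : outcome T s) : R :=
  \big[Rmult/1%R]_(x : T) \big[Rmult/1%R]_(j < s) pdraw e w x (om x j).

Definition selected_weight (T : finType) (w : T -> T -> R) (s : nat)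
    (om : outcome T s) (x : T) : R :=
  \big[Rmax/0%R]_(j < s) w x (om x j).

Definition total_selected (T : finType) (e : rel T) (w : T -> T -> R) (s : nat)
    (om : outcome T s) : R :=
  \big[Rplus/0%R]_(x | has_edge e x) selected_weight w om x.

Definition success_prob (T : finType) (e : rel T) (w : T -> T -> R) (a s : nat)
  : R :=
  \big[Rplus/0%R]_(om : outcome T s)
     (if Rle_dec (wgraph e w / (16 * INR a)) (total_selected e w om)
      then outcome_prob e w om else 0%R).

From HB Require Import structures.
From mathcomp Require Import all_boot.
From Stdlib Require Import Reals Lra.

(* Orient each of the alpha forests towards a root: every edge is then owned
   by one endpoint and every vertex owns at most alpha edges.  For each vertex
   x let t_x be the weighted upper tertile of the weights at x: the edges of
   weight >= t_x carry at least a third of w(x), those of weight > t_x at most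
   a third.  Charging the light unowned edge ends to owned ones gives
   w(G) <= 3 alpha sum_x t_x.  A single draw of x reaches weight t_x with
   probability >= 1/3, so the expected deficit sum_x t_x [x misses in all s
   trials] is at most (2/3)^s sum_x t_x; by Markov's inequality the selected
   weight exceeds (3/16) sum_x t_x >= w(G)/(16 alpha) with probability
   >= 1 - (16/13)(2/3)^s, which is >= 1 - delta for s >= ln(1/delta)/ln(39/32). *)

Set Implicit Arguments.
Unset Strict Implicit.
Unset Printing Implicit Defensive.

Section Forest.
Variables (T : finType) (r : rel T).
Hypotheses (r_irr : irreflexive r) (r_sym : symmetric r) (r_acyclic : acyclic r).

Lemma forest_path_fresh x y p u :
  path r x (y :: p) -> uniq (x :: y :: p) -> r x u -> u != y ->
  u \notin x :: y :: p.
Proof.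
move=> xyp_path xyp_uniq rxu uy; apply/negP; rewrite inE => /orP [/eqP ux|].
  by move: rxu; rewrite ux r_irr.
rewrite inE (negbTE uy) /= => u_p.
move: xyp_path xyp_uniq; case/splitPr: u_p => p1 p2 xyp_path.
set c := x :: y :: rcons p1 u.
have -> : x :: y :: p1 ++ u :: p2 = c ++ p2 by rewrite /c /= cat_rcons.
rewrite cat_uniq => /andP [c_uniq _].
have c_cycle : cycle r c.
  rewrite /c /cycle rcons_path /= last_rcons (r_sym u) rxu andbT.
  by move: xyp_path; rewrite /= -cat_rcons cat_path => /and3P [-> ->].
by have /negP := r_acyclic c_uniq (ltac:(by rewrite /c /= size_rcons)).
Qed.

(* Otherwise every vertex of S has two neighbours in S, and [forest_path_fresh]
   grows simple paths inside S beyond #|S| vertices. *)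
Lemma forest_leaf (S : {set T}) : S != set0 ->
  exists2 v, v \in S &
    forall u1 u2, u1 \in S -> u2 \in S -> r v u1 -> r v u2 -> u1 = u2.
Proof.
move=> S0.
have [/exists_inP [v vS /forall_inP leaf] | ] := boolP [exists v in S,
    [forall u1 in S, [forall u2 in S, r v u1 ==> r v u2 ==> (u1 == u2)]]].
  exists v => // u1 u2 u1S u2S r1 r2.
  by have /forall_inP /(_ u2 u2S) := leaf u1 u1S; rewrite r1 r2 => /eqP.
rewrite negb_exists_in => /forall_inP no_leaf.
have other_nb v y : v \in S -> exists2 u, u \in S & r v u && (u != y).
  move=> vS; have /forall_inPn [u1 u1S /forall_inPn [u2 u2S]] := no_leaf v vS.
  rewrite !negb_imply => /and3P [r1 r2 ne12].
  have [u1y|] := eqVneq u1 y; last by exists u1; rewrite ?r1.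
  by exists u2; rewrite ?r2 // -u1y eq_sym.
have long_path n : exists x y p, [/\ path r x (y :: p), uniq (x :: y :: p),
    all [in S] (x :: y :: p) & size p = n].
  elim: n => [|n [x [y [p [xyp_path xyp_uniq xypS <-]]]]].
    have /set0Pn [v vS] := S0; have [u uS /andP [rvu _]] := other_nb v v vS.
    exists v, u, [::]; split; rewrite /= ?rvu ?vS ?uS //.
    by rewrite inE andbT; apply: contraTneq rvu => ->; rewrite r_irr.
  have xS : x \in S by case/andP: xypS.
  have [u uS /andP [rxu uy]] := other_nb x y xS.
  exists u, x, (y :: p); split => //=.
  - by rewrite r_sym rxu.
  - by rewrite forest_path_fresh.
  - by rewrite uS.
have [x [y [p [_ xyp_uniq xypS p_size]]]] := long_path #|S|.
have /uniq_leq_size : {subset x :: y :: p <= enum S}.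
  by move=> z /(allP xypS); rewrite mem_enum.
by move/(_ xyp_uniq); rewrite -cardE /= p_size ltnNge leqW.
Qed.

(* Built by repeatedly removing a leaf, whose parent is its unique remaining
   neighbour. *)
Lemma forest_parent_map : exists par : T -> option T,
  (forall x y, par x = Some y -> r x y) /\
  (forall x y, r x y -> par x = Some y \/ par y = Some x).
Proof.
suff par_on n (S : {set T}) : #|S| = n -> exists par : T -> option T,
  (forall x y, par x = Some y -> r x y) /\
  (forall x y, x \in S -> y \in S -> r x y -> par x = Some y \/ par y = Some x).
  have [par [par_r r_par]] := par_on _ [set: T] erefl.
  by exists par; split => // x y; apply: r_par; rewrite inE.
elim: n S => [|n IH] S S_card.
  exists (fun _ => None); split => // x y.
  by move/eqP: S_card; rewrite cards_eq0 => /eqP ->; rewrite inE.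
have [v vS v_leaf] : exists2 v, v \in S & forall u1 u2,
    u1 \in S -> u2 \in S -> r v u1 -> r v u2 -> u1 = u2.
  by apply: forest_leaf; rewrite -card_gt0 S_card.
have [par [par_r r_par]] : exists par : T -> option T,
    (forall x y, par x = Some y -> r x y) /\ (forall x y, x \in S :\ v ->
      y \in S :\ v -> r x y -> par x = Some y \/ par y = Some x).
  by apply: IH; move: S_card; rewrite (cardsD1 v) vS => -[].
have par_v y : y \in S -> r v y -> [pick u in S | r v u] = Some y.
  move=> yS rvy; case: pickP => [u /andP [uS rvu]|/(_ y)]; last by rewrite yS rvy.
  by rewrite (v_leaf u y).
exists (fun x => if x == v then [pick u in S | r v u] else par x); split.
  move=> x y; case: eqP => [->|_]; last exact: par_r.
  by case: pickP => // u /andP [_ rvu] [<-].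
move=> x y xS yS rxy; have [xv|xv] := eqVneq x v.
  by left; apply: par_v; rewrite // -xv.
have [yv|yv] := eqVneq y v.
  by right; apply: par_v; rewrite // -yv r_sym.
by apply: r_par; rewrite // !inE ?xv ?yv.
Qed.

End Forest.

(* Each vertex takes as out-edges its parent edges, one per forest. *)
Lemma arboricity_orientation (T : finType) (e : rel T) (a : nat) :
  irreflexive e -> symmetric e -> arboricity_le e a ->
  exists o : rel T, [/\ subrel o e,
    forall x y, e x y -> o x y || o y x &
    forall x, #|[pred y | o x y]| <= a].
Proof.
move=> e_irr e_sym [col [col_sym col_acyclic]].
have par_col (i : 'I_a) : exists par : T -> option T,
    (forall x y, par x = Some y -> e x y && (col x y == i)) /\
    (forall x y, e x y && (col x y == i) -> par x = Some y \/ par y = Some x).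
  apply: (@forest_parent_map _ _ _ _ (col_acyclic i)) => [x|x y] /=.
    by rewrite e_irr.
  by rewrite e_sym; case: (boolP (e y x)) => //= eyx; rewrite col_sym // e_sym.
have [par par_spec] := fin_all_exists par_col.
exists [rel x y | e x y && (par (col x y) x == Some y)]; split.
- by move=> x y /andP [].
- move=> x y exy /=; rewrite exy e_sym exy -(col_sym x y exy) /=.
  by have [->|->] := (par_spec (col x y)).2 x y (ltac:(by rewrite exy eqxx));
    rewrite eqxx ?orbT.
- move=> x; apply: (@leq_trans #|pmap (fun i => par i x) (enum 'I_a)|).
    apply: subset_leq_card; apply/subsetP => y /andP [_ /eqP par_xy].
    by rewrite mem_pmap; apply/mapP; exists (col x y); rewrite ?mem_enum.
  apply: leq_trans (card_size _) _.
  by rewrite size_pmap (leq_trans (count_size _ _)) // size_enum_ord.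
Qed.

Open Scope R_scope.

Lemma RplusA : associative Rplus. Proof. by move=> x y z; ring. Qed.
Lemma RplusC : commutative Rplus. Proof. by move=> x y; ring. Qed.
Lemma Rplus0 : left_id 0 Rplus. Proof. by move=> x; ring. Qed.
Lemma RmultA : associative Rmult. Proof. by move=> x y z; ring. Qed.
Lemma RmultC : commutative Rmult. Proof. by move=> x y; ring. Qed.
Lemma Rmult1 : left_id 1 Rmult. Proof. by move=> x; ring. Qed.
Lemma Rmult0l : left_zero 0 Rmult. Proof. by move=> x; ring. Qed.
Lemma Rmult0r : right_zero 0 Rmult. Proof. by move=> x; ring. Qed.
Lemma RmultDl : left_distributive Rmult Rplus. Proof. by move=> x y z; ring. Qed.
Lemma RmultDr : right_distributive Rmult Rplus. Proof. by move=> x y z; ring. Qed.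
HB.instance Definition _ := Monoid.isComLaw.Build R 0 Rplus RplusA RplusC Rplus0.
HB.instance Definition _ := Monoid.isComLaw.Build R 1 Rmult RmultA RmultC Rmult1.
HB.instance Definition _ := Monoid.isMulLaw.Build R 0 Rmult Rmult0l Rmult0r.
HB.instance Definition _ := Monoid.isAddLaw.Build R Rmult Rplus RmultDl RmultDr.

Definition rleb (a b : R) : bool := if Rle_dec a b then true else false.
Definition rltb (a b : R) : bool := if Rlt_dec a b then true else false.

Lemma rlebP a b : reflect (a <= b) (rleb a b).
Proof. by rewrite /rleb; case: Rle_dec => ?; constructor. Qed.

Lemma rltbP a b : reflect (a < b) (rltb a b).
Proof. by rewrite /rltb; case: Rlt_dec => ?; constructor. Qed.

Lemma rltbNle a b : rltb a b = ~~ rleb b a.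
Proof.
by rewrite /rltb /rleb; case: Rlt_dec; case: Rle_dec => //= ? ?; exfalso; lra.
Qed.

Section RealBig.
Variable I : Type.
Implicit Types (r : seq I) (P : pred I) (F G : I -> R).

Lemma Rsum_le r P F G : (forall i, P i -> F i <= G i) ->
  \big[Rplus/0]_(i <- r | P i) F i <= \big[Rplus/0]_(i <- r | P i) G i.
Proof. by move=> FG; apply: (big_ind2 Rle) => //; [lra|move=> *; lra]. Qed.

Lemma Rsum_ge0 r P F : (forall i, P i -> 0 <= F i) ->
  0 <= \big[Rplus/0]_(i <- r | P i) F i.
Proof. by move=> F0; apply: (big_ind (Rle 0)) => //; [lra|move=> *; lra]. Qed.

Lemma Rprod_ge0 r P F : (forall i, P i -> 0 <= F i) ->
  0 <= \big[Rmult/1]_(i <- r | P i) F i.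
Proof.
by move=> F0; apply: (big_ind (Rle 0)) => //; [lra | exact: Rmult_le_pos].
Qed.

Lemma Rmax_big_ge0 r F : 0 <= \big[Rmax/0]_(i <- r) F i.
Proof.
elim: r => [|i r IH]; rewrite ?big_nil ?big_cons; first lra.
exact: Rle_trans IH (Rmax_r _ _).
Qed.

End RealBig.

Lemma Rmax_big_ge (I : eqType) (r : seq I) (F : I -> R) j :
  j \in r -> F j <= \big[Rmax/0]_(i <- r) F i.
Proof.
elim: r => // i r IH; rewrite inE big_cons => /orP [/eqP ->|/IH].
  exact: Rmax_l.
by move/Rle_trans; apply; apply: Rmax_r.
Qed.

Lemma Rsum_le_subset (I : finType) (P Q : pred I) (F : I -> R) :
  subpred P Q -> (forall i, Q i -> 0 <= F i) ->
  \big[Rplus/0]_(i | P i) F i <= \big[Rplus/0]_(i | Q i) F i.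
Proof.
move=> PQ F0; rewrite (big_mkcond P) (big_mkcond Q); apply: Rsum_le => i _.
case: (boolP (P i)) => [/PQ -> | _]; first lra.
by case: ifP => [/F0|]; lra.
Qed.

Lemma Rsum_const (I : finType) (P : pred I) c :
  \big[Rplus/0]_(i | P i) c = INR #|P| * c.
Proof.
rewrite big_const; elim: #|P| => [|n IH] /=; first lra.
by rewrite IH; change (c + INR n * c = INR n.+1 * c); rewrite S_INR; lra.
Qed.

Lemma Rprod_const_ord n c : \big[Rmult/1]_(j < n) c = c ^ n.
Proof. by rewrite big_const_ord; elim: n => //= n ->. Qed.

Lemma Rprod_if_all (I : finType) (b : pred I) (F : I -> R) :
  \big[Rmult/1]_i (if b i then F i else 0) =
  if [forall i, b i] then \big[Rmult/1]_i F i else 0.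
Proof.
case: (boolP [forall i, b i]) => [/forallP b_all|/forallPn [j /negbTE bj]].
  by apply: eq_bigr => i _; rewrite b_all.
by rewrite (bigD1 j) //= bj Rmult_0_l.
Qed.

Lemma Rsum_markov (I : finType) (p D : I -> R) (Q : pred I) k : 0 < k ->
  (forall i, 0 <= p i) -> (forall i, 0 <= D i) -> (forall i, Q i -> k <= D i) ->
  \big[Rplus/0]_(i | Q i) p i <= (\big[Rplus/0]_i (p i * D i)) / k.
Proof.
move=> k0 p0 D0 QD; apply: (Rmult_le_reg_r k) => //.
rewrite /Rdiv Rmult_assoc Rinv_l ?Rmult_1_r; last lra.
rewrite big_distrl /=.
apply: (Rle_trans _ (\big[Rplus/0]_(i | Q i) (p i * D i))).
  by apply: Rsum_le => i /QD; apply: Rmult_le_compat_l.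
by apply: Rsum_le_subset => // i _; apply: Rmult_le_pos.
Qed.

Lemma Rargmax_seq (I : eqType) (r : seq I) (f : I -> R) : r != [::] ->
  exists2 i, i \in r & forall j, j \in r -> f j <= f i.
Proof.
elim: r => // a r IH _; have [-> | r0] := eqVneq r [::].
  by exists a => [|j]; rewrite ?mem_seq1 // => /eqP ->; lra.
have [i ir i_max] := IH r0; have [le_ai | lt_ia] := Rle_lt_dec (f a) (f i).
  by exists i => [|j]; rewrite in_cons ?ir ?orbT // => /orP [/eqP ->|/i_max].
by exists a => [|j]; rewrite in_cons ?eqxx // => /orP [/eqP ->|/i_max]; lra.
Qed.

Lemma Rargmax (I : finType) (P : pred I) (f : I -> R) : (exists i, P i) ->
  exists2 i, P i & forall j, P j -> f j <= f i.
Proof.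
move=> [i0 Pi0]; have [|i] := @Rargmax_seq _ (enum P) f.
  by apply/eqP => P0; move: (mem_enum P i0); rewrite P0 in_nil unfold_in Pi0.
rewrite mem_enum => Pi i_max.
by exists i => // j Pj; apply: i_max; rewrite mem_enum.
Qed.

Lemma Rargmin (I : finType) (P : pred I) (f : I -> R) : (exists i, P i) ->
  exists2 i, P i & forall j, P j -> f i <= f j.
Proof.
by move=> /(Rargmax (fun i => - f i)) [i Pi i_max]; exists i => // j /i_max; lra.
Qed.

(* Take the largest [v i] whose upper set [v i <= v j] still carries a
   fraction [q] of the total weight; the minimal value is a candidate. *)
Lemma weighted_quantile (I : finType) (P : pred I) (v : I -> R) q :
  0 <= q <= 1 -> (exists i, P i) -> (forall i, P i -> 0 < v i) ->
  exists2 i, P i &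
    q * \big[Rplus/0]_(j | P j) v j
      <= \big[Rplus/0]_(j | P j && rleb (v i) (v j)) v j /\
    \big[Rplus/0]_(j | P j && rltb (v i) (v j)) v j
      <= q * \big[Rplus/0]_(j | P j) v j.
Proof.
move=> q01 P_ex v_pos; set W := \big[Rplus/0]_(j | P j) v j.
have W0 : 0 <= W by apply: Rsum_ge0 => j /v_pos; lra.
pose upper t := \big[Rplus/0]_(j | P j && rleb t (v j)) v j.
pose C i := P i && rleb (q * W) (upper (v i)).
have [m Pm m_min] := Rargmin v P_ex.
have Cm : C m.
  rewrite /C Pm; apply/rlebP; rewrite /upper (eq_bigl P).
    by case: q01 => q0 q1; rewrite -/W; nra.
  by move=> j; case Pj: (P j); rewrite //=; apply/rlebP/m_min.
have [i /andP [Pi /rlebP q_upper] i_max] := Rargmax v (ex_intro C m Cm).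
exists i => //; split => //.
apply: Rnot_lt_le => lt_qW.
have [i1 /andP [Pi1 /rltbP lt_i_i1] i1_min] :
    exists2 i1, P i1 && rltb (v i) (v i1) &
      forall j, P j && rltb (v i) (v j) -> v i1 <= v j.
  apply: Rargmin; case: (pickP (fun j => P j && rltb (v i) (v j))) => [j|P0].
    by exists j.
  by move: lt_qW; rewrite big_pred0 //; nra.
have /i_max : C i1.
  rewrite /C Pi1 /upper; apply/rlebP.
  rewrite (eq_bigl (fun j => P j && rltb (v i) (v j))); first lra.
  move=> j; case Pj: (P j) => //=; apply/rlebP/rltbP => [|lt_ij]; first lra.
  by apply: i1_min; rewrite Pj; apply/rltbP.
lra.
Qed.

Section Weights.
Variables (T : finType) (e : rel T) (w : T -> T -> R).
Hypotheses (e_sym : symmetric e) (w_pos : forall x y, e x y -> 0 < w x y).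
Hypothesis w_sym : forall x y, e x y -> w x y = w y x.

Lemma Rsum_nbh_ge0 x (P : pred T) : 0 <= \big[Rplus/0]_(y | e x y && P y) w x y.
Proof. by apply: Rsum_ge0 => y /andP [/w_pos]; lra. Qed.

Lemma wdeg_gt0 x : has_edge e x -> 0 < wdeg e w x.
Proof.
move=> /existsP [y exy]; rewrite /wdeg (bigD1 y) //=.
by have := w_pos exy; have := Rsum_nbh_ge0 x (fun i => i != y); lra.
Qed.

Lemma vertex_tertile x : exists t, [/\ 0 <= t,
  has_edge e x ->
    / 3 * wdeg e w x <= \big[Rplus/0]_(y | e x y && rleb t (w x y)) w x y,
  \big[Rplus/0]_(y | e x y && rltb t (w x y)) w x y <= / 3 * wdeg e w x &
  ~~ has_edge e x -> t = 0].
Proof.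
have [x_edge | x_isolated] := boolP (has_edge e x); last first.
  have no_nb y : e x y = false by apply/negbTE; move/existsPn: x_isolated.
  exists 0; split => //; first lra.
  rewrite /wdeg !big1; first lra.
    by move=> y; rewrite no_nb.
  by move=> y; rewrite no_nb.
have third01 : 0 <= / 3 <= 1 by lra.
have [y exy [lower upper]] :=
  weighted_quantile third01 (existsP x_edge) (fun y => @w_pos x y).
by exists (w x y); split => //; have := w_pos exy; lra.
Qed.

Lemma Rsum_unowned_le_owned (o : rel T) :
  subrel o e -> (forall x y, e x y -> o x y || o y x) ->
  \big[Rplus/0]_x \big[Rplus/0]_(y | e x y && ~~ o x y) w x y <=
  \big[Rplus/0]_x \big[Rplus/0]_(y | o x y) w x y.
Proof.
move=> o_e e_o.
apply: (Rle_trans _ (\big[Rplus/0]_x \big[Rplus/0]_(y | o y x) w x y)).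
  apply: Rsum_le => x _; apply: Rsum_le_subset.
    by move=> y /andP [/e_o]; case: (o x y).
  by move=> y /o_e; rewrite e_sym => /w_pos; lra.
rewrite (exchange_big_dep predT) //=; apply: Req_le.
by apply: eq_bigr => x _; apply: eq_bigr => y /o_e /w_sym.
Qed.

(* Split each half-edge at [x] into light ([w x y <= t x]) and heavy: heavy
   half-edges carry at most a third of all, light owned ones are at most
   [a * t x] per vertex, and light unowned ones are dominated by owned ones. *)
Lemma wgraph_le_tertiles (o : rel T) (a : nat) (t : T -> R) :
  subrel o e -> (forall x y, e x y -> o x y || o y x) ->
  (forall x, #|[pred y | o x y]| <= a)%nat -> (forall x, 0 <= t x) ->
  (forall x, \big[Rplus/0]_(y | e x y && rltb (t x) (w x y)) w x y
               <= / 3 * wdeg e w x) ->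
  wgraph e w <= 3 * INR a * \big[Rplus/0]_x t x.
Proof.
move=> o_e e_o o_deg t0 heavy_small.
pose half (P : T -> T -> bool) := \big[Rplus/0]_x \big[Rplus/0]_(y | P x y) w x y.
set light := half (fun x y => e x y && rleb (w x y) (t x)).
set heavy := half (fun x y => e x y && rltb (t x) (w x y)).
set light_owned := half (fun x y => e x y && o x y && rleb (w x y) (t x)).
have degE : \big[Rplus/0]_x wdeg e w x = light + heavy.
  rewrite -big_split; apply: eq_bigr => x _.
  rewrite /wdeg (bigID (fun y => rleb (w x y) (t x))) /=; congr (_ + _).
  by apply: eq_bigl => y; rewrite rltbNle.
have heavy_le : heavy <= / 3 * (light + heavy).
  by rewrite -degE big_distrr; apply: Rsum_le => x _.
have light_le : light <= light_owned + half (fun x y => e x y && ~~ o x y).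
  rewrite -big_split; apply: Rsum_le => x _ /=.
  rewrite (bigID (fun y => o x y)) /=; apply: Rplus_le_compat.
    by apply: Req_le; apply: eq_bigl => y; case: (e x y); case: (o x y); case: rleb.
  apply: Rsum_le_subset.
    by move=> y /andP [/andP [-> _] ->].
  by move=> y /andP [/w_pos]; lra.
have owned_le : half (fun x y => o x y) <= light_owned + heavy.
  rewrite -big_split; apply: Rsum_le => x _ /=.
  rewrite (bigID (fun y => rleb (w x y) (t x))) /=; apply: Rplus_le_compat.
    apply: Req_le; apply: eq_bigl => y.
    by case: (boolP (o x y)) => [/o_e ->|] //; rewrite andbF.
  apply: Rsum_le_subset => [y /andP [/o_e -> /=]|y /andP [/w_pos]]; last lra.
  by rewrite rltbNle.
have light_owned_le : light_owned <= INR a * \big[Rplus/0]_x t x.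
  rewrite big_distrr; apply: Rsum_le => x _.
  apply: (Rle_trans _ (\big[Rplus/0]_(y | o x y) t x)).
    apply: (Rle_trans _ (\big[Rplus/0]_(y | e x y && o x y && rleb (w x y) (t x)) t x)).
      by apply: Rsum_le => y /andP [_ /rlebP].
    by apply: Rsum_le_subset => [y /andP [/andP [_ ->]]|y _].
  rewrite (Rsum_const (fun y => o x y)); apply: Rmult_le_compat_r => //.
  by apply/le_INR/ssrnat.leP; apply: o_deg.
have unowned_le : half (fun x y => e x y && ~~ o x y) <= half (fun x y => o x y).
  exact: Rsum_unowned_le_owned.
have : 0 <= heavy by apply: Rsum_ge0 => x _; apply: Rsum_nbh_ge0.
rewrite /wgraph degE; lra.
Qed.

End Weights.

Section Sampling.
Variables (T : finType) (e : rel T) (w : T -> T -> R) (s : nat).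
Hypothesis w_pos : forall x y, e x y -> 0 < w x y.

Definition trial_prob (x : T) (f : {ffun 'I_s -> T}) : R :=
  \big[Rmult/1]_(j < s) pdraw e w x (f j).

Definition misses (t : R) (om : outcome T s) (x : T) : bool :=
  [forall j, rltb (w x (om x j)) t].

Lemma pdraw_ge0 x z : 0 <= pdraw e w x z.
Proof.
rewrite /pdraw; case: (boolP (e x z)) => [exz | _].
  have x_edge : has_edge e x by apply/existsP; exists z.
  by apply/Rlt_le/Rdiv_lt_0_compat; [apply: w_pos | apply: wdeg_gt0].
by case: has_edge; [lra | case: (z == x); lra].
Qed.

Lemma pdraw_sum x : \big[Rplus/0]_z pdraw e w x z = 1.
Proof.
rewrite /pdraw; case: (boolP (has_edge e x)) => x_edge.
  rewrite -big_mkcond -big_distrl -/(wdeg e w x) /=.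
  by have := wdeg_gt0 w_pos x_edge; move=> ?; field; lra.
have no_nb z : e x z = false by apply/negbTE; move/existsPn: x_edge.
rewrite (eq_bigr (fun z => if z == x then 1 else 0)) => [|z _].
  by rewrite -big_mkcond big_pred1_eq.
by rewrite no_nb.
Qed.

Lemma sum_trials_forall x (b : pred T) :
  \big[Rplus/0]_(f : {ffun 'I_s -> T} | [forall j, b (f j)]) trial_prob x f =
  (\big[Rplus/0]_(z | b z) pdraw e w x z) ^ s.
Proof.
rewrite big_mkcond (eq_bigr (fun f : {ffun 'I_s -> T} =>
  \big[Rmult/1]_j (if b (f j) then pdraw e w x (f j) else 0))) => [|f _].
  rewrite -(bigA_distr_bigA (fun (_ : 'I_s) z => if b z then pdraw e w x z else 0)).
  by rewrite Rprod_const_ord -big_mkcond.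
by rewrite Rprod_if_all.
Qed.

Lemma trial_prob_sum x : \big[Rplus/0]_f trial_prob x f = 1.
Proof.
have := sum_trials_forall x predT; rewrite pdraw_sum pow1 => <-.
by apply: eq_bigl => f; apply/esym/forallP.
Qed.

Lemma outcome_prob_ge0 (om : outcome T s) : 0 <= outcome_prob e w om.
Proof. by do 2 apply: Rprod_ge0 => ? _; apply: pdraw_ge0. Qed.

Lemma sum_outcome_coord x0 (P : pred {ffun 'I_s -> T}) :
  \big[Rplus/0]_(om : outcome T s | P (om x0)) outcome_prob e w om =
  \big[Rplus/0]_(f | P f) trial_prob x0 f.
Proof.
pose F x f := if (x == x0) && ~~ P f then 0 else trial_prob x f.
transitivity (\big[Rplus/0]_(om : outcome T s) \big[Rmult/1]_x F x (om x)).
  rewrite big_mkcond; apply: eq_bigr => om _; rewrite (bigD1 x0) //= /F eqxx /=.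
  case: (P (om x0)) => /=; last by rewrite Rmult_0_l.
  rewrite /outcome_prob (bigD1 x0) //=; congr (_ * _).
  by apply: eq_bigr => x /negbTE ->.
rewrite -(bigA_distr_bigA F) (bigD1 x0) //= [X in _ * X]big1.
  by rewrite Rmult_1_r [RHS]big_mkcond /F eqxx; apply: eq_bigr => f _; case: (P f).
by move=> x /negbTE x_x0; rewrite /F x_x0; apply: trial_prob_sum.
Qed.

Lemma outcome_prob_sum : \big[Rplus/0]_(om : outcome T s) outcome_prob e w om = 1.
Proof.
rewrite (eq_bigr (fun om : outcome T s => \big[Rmult/1]_x trial_prob x (om x))) //.
by rewrite -(bigA_distr_bigA trial_prob) big1 // => x _; apply: trial_prob_sum.
Qed.

(* A single draw of [x] lands below [t] with probability at most 2/3. *)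
Lemma miss_prob_le x t : has_edge e x ->
  / 3 * wdeg e w x <= \big[Rplus/0]_(y | e x y && rleb t (w x y)) w x y ->
  \big[Rplus/0]_(om : outcome T s | misses t om x) outcome_prob e w om
    <= (2 / 3) ^ s.
Proof.
move=> x_edge upper_third.
rewrite (sum_outcome_coord x (fun f => [forall j, rltb (w x (f j)) t])).
rewrite (sum_trials_forall x (fun z => rltb (w x z) t)); apply: pow_incr; split.
  by apply: Rsum_ge0 => z _; apply: pdraw_ge0.
have wdeg_pos := wdeg_gt0 w_pos x_edge.
have -> : \big[Rplus/0]_(z | rltb (w x z) t) pdraw e w x z =
          \big[Rplus/0]_(z | e x z && rltb (w x z) t) w x z / wdeg e w x.
  rewrite /Rdiv big_distrl big_mkcond [RHS]big_mkcond /=.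
  by apply: eq_bigr => z _; rewrite /pdraw x_edge; case: (e x z); case: rltb => //=; lra.
have split_wdeg : wdeg e w x =
    \big[Rplus/0]_(y | e x y && rleb t (w x y)) w x y +
    \big[Rplus/0]_(y | e x y && rltb (w x y) t) w x y.
  rewrite /wdeg (bigID (fun y => rleb t (w x y))) /=; congr (_ + _).
  by apply: eq_bigl => y; rewrite rltbNle.
apply: (Rmult_le_reg_r (wdeg e w x)) => //.
rewrite /Rdiv Rmult_assoc Rinv_l; lra.
Qed.

Lemma selected_weight_ge t (om : outcome T s) x :
  ~~ misses t om x -> t <= selected_weight w om x.
Proof.
move=> /forallPn [j]; rewrite rltbNle negbK => /rlebP t_le.
by apply: Rle_trans t_le (Rmax_big_ge _ (mem_index_enum j)).
Qed.

End Sampling.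

Section Deficit.
Variables (T : finType) (e : rel T) (w : T -> T -> R) (s : nat).
Hypothesis w_pos : forall x y, e x y -> 0 < w x y.
Variable t : T -> R.
Hypothesis t_ge0 : forall x, 0 <= t x.
Hypothesis t_isolated : forall x, ~~ has_edge e x -> t x = 0.

Definition deficit (om : outcome T s) : R :=
  \big[Rplus/0]_(x | misses w (t x) om x) t x.

Lemma deficit_ge0 om : 0 <= deficit om.
Proof. exact: Rsum_ge0. Qed.

Lemma deficit_le om : deficit om <= \big[Rplus/0]_x t x.
Proof. exact: Rsum_le_subset. Qed.

Lemma total_selected_ge_deficit om :
  \big[Rplus/0]_x t x - deficit om <= total_selected e w om.
Proof.
rewrite (bigID (fun x => misses w (t x) om x)) /= -/(deficit om) /total_selected.
rewrite big_mkcond [X in _ <= X]big_mkcond /=.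
suff : \big[Rplus/0]_x (if ~~ misses w (t x) om x then t x else 0) <=
       \big[Rplus/0]_x (if has_edge e x then selected_weight w om x else 0) by lra.
apply: Rsum_le => x _; case: (boolP (has_edge e x)) => [_ | /t_isolated ->].
  by case: ifP => [/selected_weight_ge // | _]; apply: Rmax_big_ge0.
by case: ifP => _; lra.
Qed.

Lemma expected_deficit_le :
  (forall x, has_edge e x ->
     / 3 * wdeg e w x <= \big[Rplus/0]_(y | e x y && rleb (t x) (w x y)) w x y) ->
  \big[Rplus/0]_(om : outcome T s) (outcome_prob e w om * deficit om)
    <= (2 / 3) ^ s * \big[Rplus/0]_x t x.
Proof.
move=> t_lower; rewrite big_distrr /=.
rewrite (eq_bigr (fun om => \big[Rplus/0]_x
    (if misses w (t x) om x then outcome_prob e w om * t x else 0))) => [|om _];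
  last by rewrite /deficit big_distrr big_mkcond.
rewrite exchange_big; apply: Rsum_le => x _ /=; rewrite -big_mkcond.
have [x_edge | /t_isolated t0] := boolP (has_edge e x).
  rewrite -big_distrl; apply: Rmult_le_compat_r => //.
  exact: miss_prob_le (t_lower x x_edge).
by rewrite t0 big1 => [|om _]; lra.
Qed.

End Deficit.

Lemma success_prob_complement (T : finType) (e : rel T) (w : T -> T -> R)
    (a s : nat) :
  (forall x y, e x y -> 0 < w x y) ->
  success_prob e w a s = 1 - \big[Rplus/0]_(om : outcome T s |
    ~~ rleb (wgraph e w / (16 * INR a)) (total_selected e w om))
      outcome_prob e w om.
Proof.
move=> w_pos; rewrite -(outcome_prob_sum s w_pos) (bigID (fun om =>
  rleb (wgraph e w / (16 * INR a)) (total_selected e w om))) /=.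
rewrite [X in X + _]big_mkcond.
rewrite /success_prob /Rminus Rplus_assoc Rplus_opp_r Rplus_0_r.
by apply: eq_bigr => om _; rewrite /rleb; case: Rle_dec.
Qed.

Lemma success_prob_ge (T : finType) (e : rel T) (w : T -> T -> R) (a s : nat) :
  (1 <= a)%nat -> irreflexive e -> symmetric e ->
  (forall x y, e x y -> 0 < w x y) -> (forall x y, e x y -> w x y = w y x) ->
  arboricity_le e a ->
  1 - 16 / 13 * (2 / 3) ^ s <= success_prob e w a s.
Proof.
move=> a_ge1 e_irr e_sym w_pos w_sym e_arb.
have [o [o_e e_o o_deg]] := arboricity_orientation e_irr e_sym e_arb.
have [t t_spec] := fin_all_exists (vertex_tertile w_pos).
have t_ge0 x : 0 <= t x by case: (t_spec x).
have t_isolated x : ~~ has_edge e x -> t x = 0 by case: (t_spec x).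
set S := \big[Rplus/0]_x t x.
have S_ge0 : 0 <= S by apply: Rsum_ge0.
have wG_le : wgraph e w <= 3 * INR a * S.
  apply: (wgraph_le_tertiles e_sym w_pos w_sym o_e e_o o_deg) => // x.
  by case: (t_spec x).
rewrite success_prob_complement //; set thr := wgraph e w / (16 * INR a).
have thr_le : thr <= 3 / 16 * S.
  have a_pos : 1 <= INR a by apply/(le_INR 1)/ssrnat.leP.
  apply: (Rmult_le_reg_r (16 * INR a)); first lra.
  by rewrite /thr /Rdiv Rmult_assoc Rinv_l; nra.
have fail_deficit (om : outcome T s) :
    ~~ rleb thr (total_selected e w om) -> 13 / 16 * S < deficit w t om.
  move/rlebP/Rnot_le_lt; have := total_selected_ge_deficit w t_isolated om.
  rewrite -/S; lra.
suff : \big[Rplus/0]_(om : outcome T s | ~~ rleb thr (total_selected e w om))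
    outcome_prob e w om <= 16 / 13 * (2 / 3) ^ s by lra.
have [S_pos | S0] := Rlt_le_dec 0 S; last first.
  rewrite big_pred0 => [|om]; first by have := pow_le (2 / 3) s; lra.
  apply/negbTE/negP => /fail_deficit.
  by have := deficit_le w t_ge0 om; rewrite -/S; lra.
have k_pos : 0 < 13 / 16 * S by lra.
apply: Rle_trans (Rsum_markov k_pos (outcome_prob_ge0 w_pos) (deficit_ge0 w t_ge0)
  (fun om fail => Rlt_le _ _ (fail_deficit om fail))) _.
apply: (Rle_trans _ ((2 / 3) ^ s * S / (13 / 16 * S))).
  apply/Rmult_le_compat_r/expected_deficit_le => // [|x].
    by apply/Rlt_le/Rinv_0_lt_compat.
  by case: (t_spec x).
by apply: Req_le; field; lra.
Qed.

(* Since 16/13 * (2/3) = 32/39, the bound reduces to (32/39)^s <= d. *)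
Lemma geometric_tail_le d s : 0 < d < 1 ->
  / ln (39 / 32) * ln (1 / d) <= INR s -> 16 / 13 * (2 / 3) ^ s <= d.
Proof.
move=> [d0 d1] s_ge.
have l_pos : 0 < ln (39 / 32) by rewrite -ln_1; apply: ln_increasing; lra.
have ln_d_neg : ln d < 0 by rewrite -ln_1; apply: ln_increasing.
have ln_d_ge : - ln d <= INR s * ln (39 / 32).
  move: s_ge; rewrite Rdiv_1_l ln_Rinv // => s_ge.
  apply: (Rmult_le_reg_l (/ ln (39 / 32))); first exact: Rinv_0_lt_compat.
  by have -> : / ln (39 / 32) * (INR s * ln (39 / 32)) = INR s by field; lra.
have s_pos : (1 <= s)%nat by case: s {s_ge} ln_d_ge => [|s] /=; [lra | case: s].
have le_pow : 16 / 13 * (2 / 3) ^ s <= (32 / 39) ^ s.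
  rewrite (_ : 32 / 39 = 16 / 13 * (2 / 3)); last by field.
  rewrite Rpow_mult_distr; apply: Rmult_le_compat_r; first by apply: pow_le; lra.
  by rewrite -{1}(pow_1 (16 / 13)); apply: Rle_pow; [lra | apply/ssrnat.leP].
apply: Rle_trans le_pow _; apply: Rnot_lt_le => lt_d.
have := ln_increasing _ _ d0 lt_d; rewrite ln_pow; last lra.
rewrite (_ : 32 / 39 = / (39 / 32)) ?ln_Rinv; [lra | lra | field].
Qed.

Close Scope R_scope.

Theorem mainTheorem14 :
  forall alpha : nat, (1 <= alpha)%N ->
  exists c : R, (0 < c)%R /\
  forall (T : finType) (e : rel T) (w : T -> T -> R),
    (forall x, ~~ e x x) ->
    (forall x y, e x y = e y x) ->
    (forall x y, e x y -> (0 < w x y)%R) ->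
    (forall x y, e x y -> w x y = w y x) ->
    arboricity_le e alpha ->
    forall (delta : R) (s : nat),
      (0 < delta < 1)%R ->
      (c * ln (1 / delta) <= INR s)%R ->
      (1 - delta <= success_prob e w alpha s)%R.
Proof.
move=> alpha alpha_ge1; exists (/ ln (39 / 32))%R; split.
  by apply/Rinv_0_lt_compat; rewrite -ln_1; apply: ln_increasing; lra.
move=> T e w e_loopless e_sym w_pos w_sym e_arb delta s delta01 s_ge.
have e_irr : irreflexive e by move=> x; apply/negbTE.
have := geometric_tail_le delta01 s_ge.
have := success_prob_ge s alpha_ge1 e_irr e_sym w_pos w_sym e_arb.
lra.
Qed.
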